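(* Let $m>0$, $B_0\in\mathbb R$, and let $B_{[N]}\in\mathbb R^{N\times N}$ be the Jacobi matrix $$(B_{[N]}f)_n=-\xi_{n,n+1}f_{n+1}-\xi_{n-1,n}f_{n-1}+\Big(\eta_n+\tfrac{B_0^2}{2m}+\xi_{n,n+1}+\xi_{n-1,n}\Big)f_n,\quad n\in[N],$$ with $\eta_n>0$, $\xi_{n,n+1}>0$ and the convention $\xi_{0,1}=\xi_{N,N+1}=0$. Let $$A=\begin{pmatrix} i m^{-1}B_0 I_N & -m^{-1}I_N\\ B_{[N]} & -i m^{-1}B_0 I_N\end{pmatrix}\in\mathbb C^{2N\times 2N}.$$ Then to any eigenpair $(\lambda_j,v_j)$ of $B_{[N]}$ there correspond two eigenvalues of $A$, $$\mu_j^{\pm}=\pm\frac{i\sqrt{B_0^2+\lambda_j m}}{m},$$ with eigenvectors $$V_j^{\pm}=\frac{(v_j,u_j)^T}{|(v_j,u_j)^T|},\qquad u_j=i\Big(B_0\mp\sqrt{B_0^2+\lambda_j m}\Big)v_j.$$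
   Context: $A$ is the friction-free part (in a complex basis diagonalizing the magnetic coupling) of the drift matrix of a planar chain of $N$ charged harmonic oscillators of mass $m$ in a constant magnetic field $B_0$, with pinning parameters $\eta_n$ and nearest-neighbour couplings $\xi_{n,n+1}$. $[N]=\{1,\dots,N\}$. *)

From HB Require Import structures.
From mathcomp Require Import all_boot all_order all_algebra.
From mathcomp Require Import complex.
Set Implicit Arguments. Unset Strict Implicit. Unset Printing Implicit Defensive.
Import Order.TTheory GRing.Theory Num.Theory.
Local Open Scope ring_scope.
Local Open Scope complex_scope.

(* Indices are 0-based: row/column i : 'I_N corresponds to n = i+1 in the paper.
   eta n = eta_n (n = 1..N), xi n = xi_{n,n+1} (n = 0..N). *)
Definition jacobiB (R : rcfType) (N : nat) (m B0 : R) (eta xi : nat -> R) : 'M[R]_N :=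
  \matrix_(i < N, j < N)
    (if j == i :> nat then eta i.+1 + B0 ^+ 2 / (2 * m) + xi i.+1 + xi i
     else if j == i.+1 :> nat then - xi i.+1
     else if j.+1 == i :> nat then - xi i
     else 0).

Definition driftA (R : rcfType) (N : nat) (m B0 : R) (B : 'M[R]_N) : 'M[R[i]]_(N + N) :=
  block_mx ((('i * (m^-1 * B0)%:C) : R[i])%:M) ((- (m^-1)%:C : R[i])%:M)
           (map_mx (fun x : R => x%:C) B) ((- ('i * (m^-1 * B0)%:C) : R[i])%:M).

Definition cvnorm (R : rcfType) (n : nat) (V : 'cV[R[i]]_n) : R :=
  Num.sqrt (\sum_(k < n) ((complex.Re (V k 0)) ^+ 2 + (complex.Im (V k 0)) ^+ 2)).

From HB Require Import structures.
From mathcomp Require Import all_boot all_order all_algebra.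
From mathcomp Require Import complex ring zify.
Import Order.TTheory GRing.Theory Num.Theory.
Local Open Scope ring_scope.
Local Open Scope complex_scope.

(* The off-diagonal entries of B_[N] are nonpositive and its n-th row sums to
   eta_n + B0^2/(2m) > 0, so reading B v = lam v at a component of v of maximal
   modulus gives lam > 0.  Hence s = +-sqrt(B0^2 + lam m) is real with
   s^2 = B0^2 + lam m.  On vectors (w, c w) with B w = lam w the matrix A acts by
   scalars on each block, and for c = i (B0 - s) both blocks get multiplied by
   i s / m precisely because of that relation on s. *)

Lemma eigenvalue_ge_row_sum {R : realFieldType} {n : nat} {M : 'M[R]_n}
    {v : 'cV[R]_n} {lam : R} :
  (forall i j, i != j -> M i j <= 0) -> v != 0 -> M *m v = lam *: v ->
  exists i, \sum_j M i j <= lam.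
Proof.
move=> M_offdiag v_neq0 Mv.
have [k0 vk0_neq0] : exists k, v k 0 != 0.
  apply/existsP; apply: contraNT v_neq0; rewrite negb_exists => /forallP v0.
  by apply/eqP/matrixP => i j; rewrite (ord1 j) mxE; apply/eqP/negbNE/v0.
have [k _ vk_max] := @arg_maxP _ _ 'I_n k0 xpredT (fun k => `|v k 0|) isT.
set vk := v k 0 in vk_max *.
have vk2_gt0 : 0 < vk ^+ 2.
  rewrite exprn_even_gt0 //= -normr_gt0.
  by apply: lt_le_trans (vk_max k0 isT); rewrite normr_gt0.
have row_k : \sum_j M k j * v j 0 = lam * vk.
  by have := congr1 (fun A : 'cV[R]_n => A k 0) Mv; rewrite !mxE.
exists k; rewrite -(ler_pM2r vk2_gt0) mulr_suml.
rewrite expr2 mulrA -row_k mulr_suml.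
apply: ler_sum => j _; rewrite -mulrA.
have [-> | j_neq_k] := eqVneq j k; first by [].
apply: ler_wnM2l; first by apply: M_offdiag; rewrite eq_sym.
apply: le_trans (ler_norm _) _.
rewrite normrM -expr2 -real_normK ?num_real // expr2.
by apply: ler_wpM2r => //; apply: vk_max.
Qed.

Lemma mul_block_scalar_col {F : comPzRingType} {n : nat} {M : 'M[F]_n}
    {w : 'cV[F]_n} {lam : F} (a b d c : F) :
  M *m w = lam *: w ->
  block_mx a%:M b%:M M d%:M *m col_mx w (c *: w)
  = col_mx ((a + b * c) *: w) ((lam + d * c) *: w).
Proof.
move=> Mw; rewrite mul_block_col !mul_scalar_mx Mw.
by rewrite !scalerA -!scalerDl.
Qed.

Lemma cvnorm_eq0 (R : rcfType) (n : nat) (V : 'cV[R[i]]_n) :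
  (cvnorm V == 0) = (V == 0).
Proof.
have sq_ge0 k : 0 <= complex.Re (V k 0) ^+ 2 + complex.Im (V k 0) ^+ 2.
  by rewrite addr_ge0 ?sqr_ge0.
rewrite /cvnorm sqrtr_eq0 le_eqVlt ltNge sumr_ge0 ?orbF //.
apply/eqP/eqP => [/psumr_eq0P V0 | ->]; last first.
  by rewrite big1 // => k _; rewrite mxE /= expr0n addr0.
apply/matrixP => k j; rewrite (ord1 j) mxE.
move: (V0 (fun k _ => sq_ge0 k) k isT) => /eqP.
rewrite paddr_eq0 ?sqr_ge0 // !sqrf_eq0 => /andP[/eqP re /eqP im].
by case: (V k 0) re im => a b /= -> ->.
Qed.

Lemma driftA_mul_eigen_col {R : rcfType} {n : nat} {m B0 lam s : R}
    {B : 'M[R]_n} {v : 'cV[R]_n} :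
  m != 0 -> s ^+ 2 = B0 ^+ 2 + lam * m -> B *m v = lam *: v ->
  driftA m B0 B *m col_mx (map_mx (fun x : R => x%:C) v)
                          (('i * (B0 - s)%:C) *: map_mx (fun x : R => x%:C) v)
  = ('i * (s / m)%:C) *: col_mx (map_mx (fun x : R => x%:C) v)
                                 (('i * (B0 - s)%:C) *: map_mx (fun x : R => x%:C) v).
Proof.
move=> m_neq0 s2 Bv.
have Bv_C : map_mx (fun x : R => x%:C) B *m map_mx (fun x : R => x%:C) v
            = lam%:C *: map_mx (fun x : R => x%:C) v.
  by rewrite -map_mxM Bv map_mxZ.
have lamE : lam = (s ^+ 2 - B0 ^+ 2) / m by rewrite s2 addrC addKr mulfK.
have top : 'i * (m^-1 * B0)%:C + - (m^-1)%:C * ('i * (B0 - s)%:C) = 'i * (s / m)%:C.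
  by apply/eqP; rewrite eq_complex /=; apply/andP; split; apply/eqP; field.
have bottom : lam%:C + - ('i * (m^-1 * B0)%:C) * ('i * (B0 - s)%:C)
              = 'i * (s / m)%:C * ('i * (B0 - s)%:C).
  by rewrite lamE; apply/eqP; rewrite eq_complex /=; apply/andP; split; apply/eqP; field.
by rewrite /driftA (mul_block_scalar_col _ _ _ _ Bv_C) top bottom scale_col_mx scalerA.
Qed.

Section JacobiMatrix.
Context {R : rcfType} {N : nat} {m B0 : R} {eta xi : nat -> R}.
Let B := jacobiB N m B0 eta xi.

Lemma jacobiB_offdiag_le0 :
  (forall n, (n <= N)%N -> 0 <= xi n) -> forall i j : 'I_N, i != j -> B i j <= 0.
Proof.
move=> xi_ge0 i j ij; rewrite mxE ifF; last by apply/negbTE; rewrite eq_sym.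
have := ltn_ord i; have := ltn_ord j.
case: eqP => [-> _ iN | _]; first by rewrite oppr_le0 xi_ge0.
case: eqP => [-> jN _ | _ _ _]; last by [].
by rewrite oppr_le0 xi_ge0 // ltnW.
Qed.

Hypotheses (xi0 : xi 0%N = 0) (xiN : xi N = 0).

Lemma jacobiB_row_sum (i : 'I_N) : \sum_j B i j = eta i.+1 + B0 ^+ 2 / (2 * m).
Proof.
set d := eta i.+1 + B0 ^+ 2 / (2 * m).
have entry j : B i j = (if j == i :> nat then d + xi i.+1 + xi i else 0)
                       + (if j == i.+1 :> nat then - xi i.+1 else 0)
                       + (if j.+1 == i then - xi i else 0).
  rewrite mxE; case: (eqVneq (j : nat) i) => [-> | ji].
    by rewrite ifF ?ifF ?addr0 //; apply/negbTE; lia.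
  case: (eqVneq (j : nat) i.+1) => [-> | ji1].
    by rewrite ifF ?add0r ?addr0 //; apply/negbTE; lia.
  by rewrite !add0r.
have diag : \sum_(j < N) (if j == i :> nat then d + xi i.+1 + xi i else 0)
            = d + xi i.+1 + xi i.
  by rewrite -big_mkcond (big_ord1_eq _ (fun=> _)) ltn_ord.
have upper : \sum_(j < N) (if j == i.+1 :> nat then - xi i.+1 else 0) = - xi i.+1.
  rewrite -big_mkcond (big_ord1_eq _ (fun=> _)); case: ltnP => // Ni.
  by rewrite (_ : i.+1 = N) ?xiN ?oppr0 //; apply/eqP; rewrite eqn_leq Ni ltn_ord.
have lower : \sum_(j < N) (if j.+1 == i then - xi i else 0) = - xi i.
  move: (ltn_ord i); case: (nat_of_ord i) => [_ | k kN].
    by rewrite xi0 oppr0 big1.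
  under eq_bigr do rewrite eqSS.
  by rewrite -big_mkcond (big_ord1_eq _ (fun=> _)) ltnW.
by rewrite (eq_bigr _ (fun j _ => entry j)) !big_split /= diag upper lower; ring.
Qed.

Lemma jacobiB_eigenvalue_gt0 {lam : R} {v : 'cV[R]_N} :
  0 < m -> (forall n, (1 <= n <= N)%N -> 0 < eta n) ->
  (forall n, (1 <= n < N)%N -> 0 < xi n) ->
  v != 0 -> B *m v = lam *: v -> 0 < lam.
Proof.
move=> m_gt0 eta_gt0 xi_gt0 v_neq0 Bv.
have xi_ge0 n : (n <= N)%N -> 0 <= xi n.
  move=> nN; have [-> | n_gt0] := posnP n; first by rewrite xi0.
  have [-> | n_neqN] := eqVneq n N; first by rewrite xiN.
  by apply/ltW/xi_gt0; rewrite n_gt0 ltn_neqAle n_neqN.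
have [i row_le] := eigenvalue_ge_row_sum (jacobiB_offdiag_le0 xi_ge0) v_neq0 Bv.
apply: lt_le_trans row_le; rewrite jacobiB_row_sum.
apply: ltr_wpDr; last by apply: eta_gt0; rewrite /= ltn_ord.
by rewrite divr_ge0 ?sqr_ge0 ?mulr_ge0 ?(ltW m_gt0).
Qed.

End JacobiMatrix.

Theorem proposition2p2 (R : rcfType) (N : nat) (m B0 : R) (eta xi : nat -> R)
  (hm : 0 < m)
  (heta : forall n, (1 <= n <= N)%N -> 0 < eta n)
  (hxi : forall n, (1 <= n < N)%N -> 0 < xi n)
  (hxi0 : xi 0%N = 0) (hxiN : xi N = 0)
  (lam : R) (v : 'cV[R]_N)
  (hv : v != 0) (hBv : jacobiB N m B0 eta xi *m v = lam *: v) :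
  forall sgn : bool,
    let s := (if sgn then 1 else -1) * Num.sqrt (B0 ^+ 2 + lam * m) in
    let mu : R[i] := 'i * (s / m)%:C in
    let u : 'cV[R[i]]_N := ('i * (B0 - s)%:C) *: map_mx (fun x : R => x%:C) v in
    let W : 'cV[R[i]]_(N + N) := col_mx (map_mx (fun x : R => x%:C) v) u in
    let V : 'cV[R[i]]_(N + N) := ((cvnorm W)^-1)%:C *: W in
    V != 0 /\ driftA m B0 (jacobiB N m B0 eta xi) *m V = mu *: V.
Proof.
move=> sgn s mu u W V.
have lam_gt0 := jacobiB_eigenvalue_gt0 hxi0 hxiN hm heta hxi hv hBv.
have s2 : s ^+ 2 = B0 ^+ 2 + lam * m.
  have sign2 : (if sgn then 1 else -1) ^+ 2 = 1 :> R by case: ifP; rewrite ?sqrrN expr1n.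
  by rewrite exprMn sign2 mul1r sqr_sqrtr // addr_ge0 ?sqr_ge0 ?mulr_ge0 ?ltW.
have AW : driftA m B0 (jacobiB N m B0 eta xi) *m W = mu *: W.
  exact: driftA_mul_eigen_col (lt0r_neq0 hm) s2 hBv.
have W_neq0 : W != 0 by rewrite col_mx_eq0 map_mx_eq0 negb_and hv.
split; last by rewrite /V -scalemxAr AW !scalerA mulrC.
by rewrite /V scaler_eq0 negb_or W_neq0 fmorph_eq0 invr_eq0 cvnorm_eq0 W_neq0.
Qed.
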